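(* Let $\mathcal R=\{1,\dots,N\}$ be a set of robots communicating over a connected undirected graph $\mathcal G=(\mathcal R,\mathcal E)$ with diameter $d(\mathcal G)$, and let $\mathcal N_i$ denote the neighbors of robot $i$. Each robot $i$ has a finite candidate action set $\mathcal V_i$; let $\mathcal V=\bigcup_{i\in\mathcal R}\mathcal V_i$ and let $f:2^{\mathcal V}\to\mathbb R$ be a monotone non-decreasing submodular set function (writing $f(v)$ for $f(\{v\})$). Let $K\le N$ be a positive integer. Consider the following synchronous distributed procedure (GenerateRemovals), executed by every robot $i$ with a local set $\mathcal S_1^i$ initialized to $\emptyset$: in each round, (1) if $\mathcal S_1^i=\emptyset$, robot $i$ sets $\mathcal S_1^i\leftarrow\{s_i\}$ with $s_i\in\arg\max_{v\in\mathcal V_i} f(v)$ and records $f(s_i)$; (2) robot $i$ sets $\mathcal S_1^i\leftarrow \mathcal S_1^i\cup\bigcup_{j\in\mathcal N_i}\mathcal S_1^j$ using the sets most recently sent by its neighbors; (3) with $M=\min(K,|\mathcal S_1^i|)$, robot $i$ replaces $\mathcal S_1^i$ by the $M$ actions of $\mathcal S_1^i$ having the largest values $f(s)$ (sorting the values in descending order); (4) robot $i$ sends $\mathcal S_1^i$ together with the values $f(s)$, $s\in\mathcal S_1^i$, to all its neighbors. Then: (i) (approximation performance) the final set of every robot satisfies $\mathcal S_1^i=\mathcal S_1$, where $\mathcal S_1$ is the $K$-max consensus result, i.e. the set of the $K$ actions with the largest values $f(s_r)$ among the robots' individual best actions $\{s_r: r\in\mathcal R\}$; (ii) (convergence time)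 the procedure takes $d(\mathcal G)$ rounds to converge; (iii) (computational complexity) the computational complexity (number of evaluations of $f$) for every robot $i$ is at most $\mathcal O(|\mathcal V_i|)$.
   Context: This procedure is Phase I of a distributed algorithm for resilient multi-robot action selection: the robots must choose a set $\mathcal S\subseteq\mathcal V$ with $|\mathcal S\cap\mathcal V_i|=1$ for every $i$, to maximize $\min_{\mathcal F\subseteq\mathcal S,\,|\mathcal F|\le K} f(\mathcal S\setminus\mathcal F)$, where $\mathcal F$ models actions of up to $K$ robots whose sensors are attacked (robots with attacked sensors can still communicate). Phase I computes the set $\mathcal S_1$ used to approximate the worst-case removal set. Communication is synchronous; one round consists of one local computation and one exchange with neighbors. *)

From HB Require Import structures.
From mathcomp Require Import all_boot all_order all_algebra.
Set Implicit Arguments. Unset Strict Implicit. Unset Printing Implicit Defensive.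
Import Order.TTheory GRing.Theory Num.Theory.
Local Open Scope ring_scope.

Definition monotone_setfun (R : realFieldType) (V : finType) (f : {set V} -> R) :=
  forall A B : {set V}, A \subset B -> f A <= f B.

Definition submodular (R : realFieldType) (V : finType) (f : {set V} -> R) :=
  forall A B : {set V}, f (A :|: B) + f (A :&: B) <= f A + f B.

Definition walkb (N : nat) (adj : rel 'I_N) (n : nat) (i j : 'I_N) : bool :=
  [exists p : n.-tuple 'I_N, path adj i p && (last i p == j)].

(* shortest-path distance (in a connected graph it is < N) *)
Definition gdist (N : nat) (adj : rel 'I_N) (i j : 'I_N) : nat :=
  find (fun n => walkb adj n i j) (iota 0 N).

Definition diameter (N : nat) (adj : rel 'I_N) : nat :=
  (\max_(i < N) \max_(j < N) gdist adj i j)%N.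

Definition better (R : realFieldType) (V : finType) (f : {set V} -> R) (a b : V) : bool :=
  (f [set b] < f [set a]) || ((f [set a] == f [set b]) && (enum_rank a < enum_rank b)%N).

Definition best_set (R : realFieldType) (V : finType) (N : nat)
    (Vi : 'I_N -> {set V}) (f : {set V} -> R) (r : 'I_N) : {set V} :=
  [set v in Vi r | [forall w in Vi r, ~~ better f w v]].

Definition kmax_consensus (R : realFieldType) (V : finType) (N : nat)
    (Vi : 'I_N -> {set V}) (f : {set V} -> R) (K : nat) : {set V} :=
  let C := \bigcup_(r < N) best_set Vi f r in
  [set s in C | (#|[set t in C | better f t s]| < K)%N].

(* Computations querying the oracle f (to count evaluations of f)      *)
Inductive comp (V : finType) (R A : Type) : Type :=
  | Ret : A -> comp V R A
  | Query : {set V} -> (R -> comp V R A) -> comp V R A.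
Arguments Ret {V R A}.
Arguments Query {V R A}.

Fixpoint cbind (V : finType) (R A B : Type) (c : comp V R A) (k : A -> comp V R B)
    : comp V R B :=
  match c with
  | Ret a => k a
  | Query X g => Query X (fun r => cbind (g r) k)
  end.

Fixpoint run (V : finType) (R A : Type) (f : {set V} -> R) (c : comp V R A) : A * nat :=
  match c with
  | Ret a => (a, 0%N)
  | Query X g => let p := run f (g (f X)) in (p.1, p.2.+1)
  end.

Fixpoint eval_all (V : finType) (R : Type) (vs : seq V) : comp V R (seq (V * R)) :=
  match vs with
  | [::] => Ret [::]
  | v :: vs' => Query [set v] (fun r => cbind (eval_all R vs') (fun l => Ret ((v, r) :: l)))
  end.

Definition betterP (R : realFieldType) (V : finType) (a b : V * R) : bool :=
  (b.2 < a.2) || ((a.2 == b.2) && (enum_rank a.1 < enum_rank b.1)%N).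

Definition best_of (R : realFieldType) (V : finType) (l : seq (V * R)) : seq (V * R) :=
  if l is p :: l' then [:: foldl (fun q x => if betterP x q then x else q) p l'] else [::].

Definition topK (R : realFieldType) (V : finType) (K : nat) (u : seq (V * R)) : seq (V * R) :=
  [seq p <- u | (count (fun q => betterP q p) u < K)%N].

Definition merge (R : realFieldType) (V : finType) (K : nat)
    (st : seq (V * R)) (recv : seq (seq (V * R))) : seq (V * R) :=
  topK K (undup (st ++ flatten recv)).

Definition round_comp (R : realFieldType) (V : finType) (N : nat)
    (Vi : 'I_N -> {set V}) (K : nat) (i : 'I_N)
    (st : seq (V * R)) (recv : seq (seq (V * R))) : comp V R (seq (V * R)) :=
  cbind (if st is [::] then cbind (eval_all R (enum (Vi i))) (fun l => Ret (best_of l))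
         else Ret st)
        (fun st1 => Ret (merge K st1 recv)).

(* synchronous execution: sim t i = (S_1^i after round t, i.e. the set sent
   at step (4) of round t ; number of evaluations of f by robot i in rounds 1..t). *)
Fixpoint sim (R : realFieldType) (V : finType) (N : nat) (adj : rel 'I_N)
    (Vi : 'I_N -> {set V}) (f : {set V} -> R) (K : nat) (t : nat)
    : 'I_N -> seq (V * R) * nat :=
  match t with
  | 0 => fun _ => ([::], 0%N)
  | t'.+1 => fun i =>
      let prev := sim adj Vi f K t' in
      let recv := [seq (prev j).1 | j <- enum 'I_N & adj i j] in
      let r := run f (round_comp Vi K i (prev i).1 recv) in
      (r.1, ((prev i).2 + r.2)%N)
  end.

(* the set held by robot i after t exchange rounds: the output of its local
   computation (steps (1)-(3)) that incorporates the sets received from its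
   neighbours in the t-th exchange, i.e. S_1^i computed in round t+1
   (for t = 0: the initial {s_i}, no communication). *)
Definition final_set (R : realFieldType) (V : finType) (N : nat) (adj : rel 'I_N)
    (Vi : 'I_N -> {set V}) (f : {set V} -> R) (K : nat) (i : 'I_N) (t : nat) : {set V} :=
  [set x | x \in map fst (sim adj Vi f K t.+1 i).1].

Definition evals (R : realFieldType) (V : finType) (N : nat) (adj : rel 'I_N)
    (Vi : 'I_N -> {set V}) (f : {set V} -> R) (K : nat) (i : 'I_N) (t : nat) : nat :=
  (sim adj Vi f K t i).2.

(** Ranking actions by their value f({v}), ties broken by the enumeration
    order, is a strict total order, so "the K best elements" of a set is
    well defined, and it commutes with unions: the K best of a union are the
    K best among the K best of each part, since an element that is among the K
    best of the union is a fortiori among the K best of its own part.  Hence,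
    by induction on the rounds, after round t+1 robot i holds exactly the K
    best among the individual best actions s_r of the robots r within distance
    t of i; once t reaches the diameter these are all robots, which is the
    K-max consensus.  The function f is only evaluated in the first round, once
    for each action of V_i. *)

From Pilot Require Import Defs.
From HB Require Import structures.
From mathcomp Require Import all_boot all_order all_algebra.
Import Order.TTheory GRing.Theory Num.Theory.
Local Open Scope ring_scope.
Set Implicit Arguments. Unset Strict Implicit.

Section BetterOrder.
Variables (R : realFieldType) (V : finType).

Lemma betterP_irr : irreflexive (@betterP R V).
Proof. by move=> p; rewrite /betterP ltxx eqxx ltnn. Qed.

Lemma betterP_trans : transitive (@betterP R V).
Proof.
move=> q p r; rewrite /betterP.
case/orP=> [lt_qp|/andP[/eqP e_pq lt_pq]] /orP[lt_rq|/andP[/eqP e_qr lt_qr]].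
- by rewrite (lt_trans lt_rq lt_qp).
- by rewrite -e_qr lt_qp.
- by rewrite e_pq lt_rq.
- by rewrite e_pq e_qr eqxx (ltn_trans lt_pq lt_qr) orbT.
Qed.

Lemma betterP_total (p q : V * R) : p != q -> betterP p q || betterP q p.
Proof.
case: p q => [a x] [b y] neq; rewrite /betterP /=.
case: (ltgtP x y) => //= e_xy.
case: (ltngtP (enum_rank a) (enum_rank b)) => // /val_inj/enum_rank_inj e_ab.
by rewrite e_ab e_xy eqxx in neq.
Qed.

Variable f : {set V} -> R.

Lemma better_irr : irreflexive (better f).
Proof. by move=> a; apply: (betterP_irr (a, f [set a])). Qed.

Lemma better_trans : transitive (better f).
Proof.
by move=> b a c; apply: (@betterP_trans (b, f [set b]) (a, f [set a]) (c, f [set c])).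
Qed.

Lemma better_total a b : a != b -> better f a b || better f b a.
Proof.
move=> neq; apply: (@betterP_total (a, f [set a]) (b, f [set b])).
by apply: contra neq => /eqP[->].
Qed.

End BetterOrder.

Section FoldlArgmax.
Variables (T : eqType) (lt : rel T).
Hypothesis lt_irr : irreflexive lt.
Hypothesis lt_trans : transitive lt.
Hypothesis lt_total : forall x y, x != y -> lt x y || lt y x.

Lemma foldl_argmax p l :
  let q := foldl (fun q x => if lt x q then x else q) p l in
  q \in p :: l /\ {in p :: l, forall x, ~~ lt x q}.
Proof.
elim: l p => [|y l IHl] p /=.
  by split=> [|x]; rewrite ?inE // => /eqP->; rewrite lt_irr.
set p' := if lt y p then y else p.
have [q_in q_max] := IHl p'; set q := foldl _ p' l in q_in q_max *.
have p'_in : p' \in [:: p, y & l] by rewrite /p'; case: ifP; rewrite !inE eqxx ?orbT.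
split.
  by move: q_in; rewrite inE => /predU1P[->|ql] //; rewrite !inE ql !orbT.
have not_lt_p'q : ~~ lt p' q by apply: q_max; rewrite inE eqxx.
move=> x; rewrite !inE => /or3P[/eqP->|/eqP->|xl];
  last by apply: q_max; rewrite inE xl orbT.
- apply/negP=> lt_pq; move: not_lt_p'q; rewrite /p'.
  by case: ifP => [lt_yp|_]; rewrite ?lt_pq // (lt_trans lt_yp lt_pq).
- apply/negP=> lt_yq; move: not_lt_p'q; rewrite /p'.
  case: ifP => [_|/negbT not_lt_yp]; first by rewrite lt_yq.
  have [e_yp|neq] := eqVneq y p; first by rewrite -e_yp lt_yq.
  move: (lt_total neq); rewrite (negbTE not_lt_yp) /= => lt_py.
  by rewrite (lt_trans lt_py lt_yq).
Qed.
End FoldlArgmax.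

Section TopK.
Variables (R : realFieldType) (V : finType) (f : {set V} -> R) (K : nat).

Definition topKset (C : {set V}) : {set V} :=
  [set s in C | (#|[set t in C | better f t s]| < K)%N].

Lemma topKset_sub (C : {set V}) : topKset C \subset C.
Proof. by apply/subsetP => s; rewrite inE => /andP[]. Qed.

Lemma topKset_restrict (A C : {set V}) s :
  A \subset C -> s \in A -> s \in topKset C -> s \in topKset A.
Proof.
move=> sub_AC sA; rewrite !inE sA => /andP[_]; apply: leq_ltn_trans.
apply/subset_leq_card/subsetP => t; rewrite !inE => /andP[tA ->].
by rewrite (subsetP sub_AC _ tA).
Qed.

Lemma topKset_excluded (C : {set V}) s : s \in C -> s \notin topKset C ->
  (K <= #|[set t in topKset C | better f t s]|)%N.
Proof.
move=> sC sK; pose rank t := #|[set u in C | better f u t]|.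
have rank_ge t : t \in C -> t \notin topKset C -> (K <= rank t)%N.
  by move=> tC; rewrite inE tC -leqNgt.
suff: forall n t, (rank t <= n)%N -> t \in C -> t \notin topKset C ->
    (t == s) || better f t s -> (K <= #|[set u in topKset C | better f u s]|)%N.
  by move/(_ _ s (leqnn _) sC sK); rewrite eqxx; apply.
elim=> [|n IHn] t rank_t tC tK t_s.
  by have := leq_trans (rank_ge t tC tK) rank_t; rewrite leqn0 => /eqP->.
have better_s u : better f u t -> better f u s.
  by case/predU1P: t_s => [<- //|bts] but; apply: better_trans bts.
have [sub_top|] := boolP ([set u in C | better f u t] \subset topKset C).
  apply: leq_trans (rank_ge t tC tK) _; apply/subset_leq_card/subsetP => u uCt.
  rewrite inE (subsetP sub_top _ uCt) /=.
  by move: uCt; rewrite inE => /andP[_ /better_s].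
case/subsetPn => u; rewrite inE => /andP[uC but] uK.
apply: (IHn u) => //; last by rewrite better_s ?orbT.
rewrite -ltnS; apply: leq_trans rank_t; apply/proper_card/properP; split.
  by apply/subsetP => w; rewrite !inE => /andP[-> /better_trans->].
by exists u; rewrite !inE ?uC ?but ?better_irr.
Qed.

Lemma topKset_neq0 (C : {set V}) : (0 < K)%N -> C != set0 -> topKset C != set0.
Proof.
move=> K_gt0 /set0Pn[s sC]; apply/set0Pn.
have [sK|/(topKset_excluded sC)] := boolP (s \in topKset C); first by exists s.
move/(leq_trans K_gt0); rewrite card_gt0 => /set0Pn[t].
by rewrite inE => /andP[tK _]; exists t.
Qed.

Lemma topKset_squeeze (C D : {set V}) :
  topKset C \subset D -> D \subset C -> topKset D = topKset C.
Proof.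
move=> sub_topD sub_DC; apply/setP => s; apply/idP/idP => [sD|sC]; last first.
  exact: topKset_restrict sub_DC (subsetP sub_topD _ sC) sC.
have sD' := subsetP (topKset_sub D) _ sD.
apply: contraTT sD => /(topKset_excluded (subsetP sub_DC _ sD')) le_K.
rewrite inE negb_and -leqNgt; apply/orP; right; apply: leq_trans le_K _.
apply/subset_leq_card/subsetP => t /setIdP[tK bts].
by apply/setIdP; split=> //; apply: (subsetP sub_topD).
Qed.

Lemma topKset_bigcup (I : finType) (P : pred I) (A : I -> {set V}) :
  topKset (\bigcup_(j | P j) topKset (A j)) = topKset (\bigcup_(j | P j) A j).
Proof.
apply: topKset_squeeze.
  apply/subsetP => s sK; have /bigcupP[j Pj sA] := subsetP (topKset_sub _) _ sK.
  by apply/bigcupP; exists j => //; apply: topKset_restrict sA sK; apply: bigcup_sup.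
by apply/bigcupsP => j Pj; apply: subset_trans (topKset_sub _) (bigcup_sup j Pj).
Qed.

End TopK.

Lemma count_card (V : finType) (P : pred V) (s : seq V) :
  uniq s -> count P s = #|[set t in [set x | x \in s] | P t]|.
Proof.
rewrite -size_filter => /(filter_uniq P)/card_uniqP <-.
by apply: eq_card => t; rewrite !inE mem_filter andbC.
Qed.

Section LocalComputation.
Variables (R : realFieldType) (V : finType) (f : {set V} -> R) (K : nat).

Definition annotate (s : seq V) : seq (V * R) := [seq (v, f [set v]) | v <- s].

Definition topKseq (s : seq V) : seq V :=
  [seq v <- s | (count (better f ^~ v) s < K)%N].

Lemma annotateK : cancel annotate (map fst).
Proof. by apply: mapK. Qed.

Lemma topK_annotate s : topK K (annotate s) = annotate (topKseq s).
Proof.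
rewrite /topK /annotate filter_map; congr map.
by apply: eq_filter => v; rewrite /= count_map.
Qed.

Lemma merge_annotate s ss :
  Defs.merge K (annotate s) (map annotate ss)
  = annotate (topKseq (undup (s ++ flatten ss))).
Proof.
rewrite /Defs.merge.
have -> : flatten (map annotate ss) = annotate (flatten ss).
  by rewrite /annotate map_flatten.
by rewrite /annotate -map_cat undup_map_inj ?topK_annotate // => v w [].
Qed.

Lemma topKseq_set s :
  uniq s -> [set x | x \in topKseq s] = topKset f K [set x | x \in s].
Proof.
by move=> uniq_s; apply/setP => x; rewrite !inE mem_filter andbC count_card.
Qed.

Lemma merge_spec s ss : let u := Defs.merge K (annotate s) (map annotate ss) in
  u = annotate (map fst u) /\
  [set x | x \in map fst u] = topKset f K [set x | x \in s ++ flatten ss].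
Proof.
rewrite /= merge_annotate annotateK topKseq_set ?undup_uniq //; split=> //.
by congr topKset; apply/setP => x; rewrite !inE mem_undup.
Qed.

Lemma best_of_annotate vs : vs != [::] ->
  exists2 b, best_of (annotate vs) = annotate [:: b] &
             b \in vs /\ {in vs, forall w, ~~ better f w b}.
Proof.
case: vs => [//|v vs] _.
have [q_in q_max] := foldl_argmax (@betterP_irr R V) (@betterP_trans R V)
  (@betterP_total R V) (v, f [set v]) (annotate vs).
set q := foldl _ _ _ in q_in q_max.
have /mapP[b b_in q_eq] : q \in annotate (v :: vs) by [].
exists b; first by rewrite /= -/q q_eq.
split=> // w w_in; move: (q_max (w, f [set w]) (map_f _ w_in)).
by rewrite q_eq.
Qed.

Lemma run_cbind (A B : Type) (c : Defs.comp V R A) (k : A -> Defs.comp V R B) :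
  run f (cbind c k)
  = ((run f (k (run f c).1)).1, ((run f c).2 + (run f (k (run f c).1)).2)%N).
Proof.
elim: c => [a|X g IH] /=; first by rewrite add0n; case: (run f (k a)).
by rewrite IH.
Qed.

Lemma run_eval_all vs : run f (eval_all R vs) = (annotate vs, size vs).
Proof. by elim: vs => [|v vs IH] //=; rewrite run_cbind IH /= addn0. Qed.

Variables (N : nat) (Vi : 'I_N -> {set V}) (i : 'I_N).

Lemma run_round_nil recv :
  run f (round_comp Vi K i [::] recv)
  = (Defs.merge K (best_of (annotate (enum (Vi i)))) recv, #|Vi i|).
Proof. by rewrite /round_comp !run_cbind run_eval_all /= cardE !addn0. Qed.

Lemma run_round_cons st recv :
  st != [::] -> run f (round_comp Vi K i st recv) = (Defs.merge K st recv, 0%N).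
Proof. by case: st. Qed.

Lemma best_set_eq b :
  b \in Vi i -> {in Vi i, forall w, ~~ better f w b} -> best_set Vi f i = [set b].
Proof.
move=> b_in b_max; apply/setP => x; rewrite !inE.
apply/andP/eqP => [[x_in /forall_inP x_max]|->]; last first.
  by split=> //; apply/forall_inP => w; apply: b_max.
apply/eqP; apply: contraT => neq.
by case/orP: (better_total f neq) => [bxb|bbx];
  [move: (b_max x x_in) | move: (x_max b b_in)]; rewrite ?bxb ?bbx.
Qed.

Lemma best_of_enum : Vi i != set0 ->
  exists2 b, best_of (annotate (enum (Vi i))) = annotate [:: b]
           & best_set Vi f i = [set b].
Proof.
move=> Vi_neq0; have enum_neq : enum (Vi i) != [::].
  apply: contra Vi_neq0 => /eqP enum_nil.
  by apply/eqP/setP => x; rewrite -mem_enum enum_nil inE.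
have [b best_b [b_in b_max]] := best_of_annotate enum_neq.
exists b => //; apply: best_set_eq; first by rewrite -mem_enum.
by move=> w; rewrite -mem_enum; apply: b_max.
Qed.

End LocalComputation.

Section Distance.
Variables (N : nat) (adj : rel 'I_N).

Lemma gdist_walk i r : connect adj i r -> walkb adj (gdist adj i r) i r.
Proof.
case/connectP => p0 path_p0 last_p0.
case/shortenP: path_p0 last_p0 => p path_p uniq_p _ last_p.
have size_p : (size p < N)%N.
  by have := max_card (mem (i :: p)); rewrite card_ord (card_uniqP uniq_p).
have walk_p : walkb adj (size p) i r.
  by apply/existsP; exists (in_tuple p); rewrite /= path_p -last_p eqxx.
have has_walk : has (fun n => walkb adj n i r) (iota 0 N).
  by apply/hasP; exists (size p); rewrite ?mem_iota.
have := nth_find 0%N has_walk; rewrite nth_iota ?add0n //.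
by move: has_walk; rewrite has_find size_iota.
Qed.

Lemma gdist_le_diameter i r : (gdist adj i r <= diameter adj)%N.
Proof.
apply: leq_trans (@leq_bigmax _ (fun i0 => \max_(j < N) gdist adj i0 j) i).
exact: (@leq_bigmax _ (fun j => gdist adj i j) r).
Qed.

End Distance.

Lemma set_cat_flatten (V I : finType) (e : rel I) (S : I -> seq V) i :
  [set x | x \in S i ++ flatten [seq S j | j <- enum I & e i j]]
  = \bigcup_(j | (j == i) || e i j) [set x | x \in S j].
Proof.
apply/setP => x; rewrite inE mem_cat.
apply/orP/bigcupP => [[x_in|/flatten_mapP[j]]|[j /predU1P[->|e_ij]]].
- by exists i; rewrite ?eqxx ?inE.
- by rewrite mem_filter mem_enum andbT => e_ij x_in; exists j; rewrite ?e_ij ?orbT ?inE.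
- by rewrite inE; left.
- rewrite inE => x_in; right; apply/flatten_mapP;
  by exists j; rewrite // mem_filter e_ij mem_enum.
Qed.

Section Simulation.
Variables (R : realFieldType) (V : finType) (N : nat) (adj : rel 'I_N).
Variables (Vi : 'I_N -> {set V}) (f : {set V} -> R) (K : nat).

Fixpoint known (t : nat) : 'I_N -> {set V} :=
  if t is t'.+1 then fun i => \bigcup_(j | (j == i) || adj i j) known t' j
  else best_set Vi f.

Lemma known_mono m n i : (m <= n)%N -> known m i \subset known n i.
Proof.
move/subnK <-; elim: (n - m)%N => [|k IHk] //=.
by apply: subset_trans IHk (bigcup_sup _ _); rewrite eqxx.
Qed.

Lemma known_walk n i r : walkb adj n i r -> best_set Vi f r \subset known n i.
Proof.
elim: n i => [|n IHn] i /existsP[p /andP[path_p /eqP last_p]].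
  by move: last_p; rewrite tuple0 /= => ->.
case/tupleP: p path_p last_p => x p /= /andP[adj_ix path_p] last_p.
have /IHn : walkb adj n x r by apply/existsP; exists p; rewrite path_p last_p eqxx.
by move/subset_trans; apply; apply: bigcup_sup; rewrite adj_ix orbT.
Qed.

Lemma known_sub t i : known t i \subset \bigcup_(r < N) best_set Vi f r.
Proof.
elim: t i => [|t IHt] i /=; first exact: bigcup_sup.
by apply/bigcupsP => j _; apply: IHt.
Qed.

Lemma known_diameter t i : (forall i j, connect adj i j) -> (diameter adj <= t)%N ->
  known t i = \bigcup_(r < N) best_set Vi f r.
Proof.
move=> connected diam_t; apply/eqP; rewrite eqEsubset known_sub.
apply/bigcupsP => r _; apply: subset_trans (known_walk (gdist_walk (connected i r))) _.
exact/known_mono/(leq_trans (gdist_le_diameter adj i r)).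
Qed.

Hypotheses (Vi_neq0 : forall i, Vi i != set0) (K_gt0 : (0 < K)%N).

Definition sim_inv t i (u : seq (V * R) * nat) :=
  [/\ u.1 = annotate f (map fst u.1), u.2 = #|Vi i|
    & [set x | x \in map fst u.1] = topKset f K (known t i)].

Lemma sim_inv_first_round i : sim_inv 0 i (sim adj Vi f K 1 i).
Proof.
rewrite /sim_inv /= run_round_nil; have [b -> best_i] := best_of_enum f (Vi_neq0 i).
set nils := [seq [::] | j <- enum 'I_N & adj i j].
have -> : nils = map (annotate f) [seq [::] | j <- enum 'I_N & adj i j].
  by rewrite -map_comp.
have [u_eq u_set] := merge_spec f K [:: b] [seq [::] | j <- enum 'I_N & adj i j].
split=> //; rewrite u_set best_i; congr topKset.
apply/setP => x; rewrite !inE.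
by case: flatten_mapP => [[]|]; rewrite ?orbF.
Qed.

(* Stated on the body of [sim], so that [sim_invariant] follows by conversion. *)
Lemma sim_inv_next_round t (prev : 'I_N -> seq (V * R) * nat) i :
  (forall j, sim_inv t j (prev j)) ->
  sim_inv t.+1 i
    (let recv := [seq (prev j).1 | j <- enum 'I_N & adj i j] in
     let r := run f (round_comp Vi K i (prev i).1 recv) in
     (r.1, ((prev i).2 + r.2)%N)).
Proof.
move=> prev_inv; pose A j := map fst (prev j).1.
have recv_eq : [seq (prev j).1 | j <- enum 'I_N & adj i j]
             = map (annotate f) [seq A j | j <- enum 'I_N & adj i j].
  by rewrite -map_comp; apply: eq_map => j; case: (prev_inv j).
have [own_eq own_evals own_set] := prev_inv i.
have known_neq0 : known t i != set0.
  have [b _ best_i] := best_of_enum f (Vi_neq0 i).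
  apply/set0Pn; exists b; apply: (subsetP (known_mono i (leq0n t))).
  by rewrite /= best_i set11.
have own_neq : (prev i).1 != [::].
  apply: contra_neq (topKset_neq0 f K_gt0 known_neq0) => own_nil.
  by rewrite -own_set own_nil; apply/setP => x; rewrite !inE.
rewrite /= run_round_cons // recv_eq own_eq.
have [u_eq u_set] := merge_spec f K (A i) [seq A j | j <- enum 'I_N & adj i j].
split=> //=; first by rewrite own_evals addn0.
have A_set j : [set x | x \in A j] = topKset f K (known t j) by case: (prev_inv j).
by rewrite u_set set_cat_flatten (eq_bigr _ (fun j _ => A_set j)) topKset_bigcup.
Qed.

Lemma sim_invariant t i : sim_inv t i (sim adj Vi f K t.+1 i).
Proof.
elim: t i => [|t IHt] i; first exact: sim_inv_first_round.
exact: sim_inv_next_round.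
Qed.
End Simulation.

Theorem lemma1 :
  (forall (R : realFieldType) (V : finType) (N : nat) (adj : rel 'I_N)
          (Vi : 'I_N -> {set V}) (f : {set V} -> R) (K : nat),
     symmetric adj -> irreflexive adj -> (forall i j, connect adj i j) ->
     (forall i, Vi i != set0) -> \bigcup_(i < N) Vi i = [set: V] ->
     monotone_setfun f -> submodular f -> (0 < K)%N -> (K <= N)%N ->
     forall (i : 'I_N) (t : nat), (diameter adj <= t)%N ->
       final_set adj Vi f K i t = kmax_consensus Vi f K)
  /\
  (exists C : nat,
     forall (R : realFieldType) (V : finType) (N : nat) (adj : rel 'I_N)
            (Vi : 'I_N -> {set V}) (f : {set V} -> R) (K : nat),
     symmetric adj -> irreflexive adj -> (forall i j, connect adj i j) ->
     (forall i, Vi i != set0) -> \bigcup_(i < N) Vi i = [set: V] ->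
     monotone_setfun f -> submodular f -> (0 < K)%N -> (K <= N)%N ->
     forall (i : 'I_N) (t : nat), (evals adj Vi f K i t <= C * #|Vi i|)%N).
Proof.
split.
  move=> R V N adj Vi f K _ _ connected Vi_neq0 _ _ _ K_gt0 _ i t diam_t.
  have [_ _ sim_set] := sim_invariant adj f Vi_neq0 K_gt0 t i.
  by rewrite /final_set sim_set known_diameter.
exists 1%N => R V N adj Vi f K _ _ _ Vi_neq0 _ _ _ K_gt0 _ i [|t] //.
have [_ sim_evals _] := sim_invariant adj f Vi_neq0 K_gt0 t i.
by rewrite /evals sim_evals mul1n.
Qed.
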